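(* Let $\mathcal{G}=(V,E)$ be an $m$-uniform connected hypergraph with $m>2$ and $n$ vertices. Then $$\lambda_n(L_{\mathcal{G}})\le\max_{i\in V}\frac{2d_i(m-1)-1+\sqrt{4(m-1)^2d_i m_i D_{\max}^2-2d_i(m-1)+1}}{2(m-1)},$$ where $m_i=\big(\sum_{j\sim i}d_j\big)/\big(d_i(m-1)\big)$ and $D_{\max}=\max\{d_{xy}: x,y\in V\}$.
   Context: A hypergraph $\mathcal{G}=(V,E)$ has a finite vertex set $V$ and a set $E$ of subsets of $V$ (edges); it is $m$-uniform if every edge has exactly $m$ vertices. Distinct vertices $i,j$ are adjacent ($i\sim j$) if some edge contains both. The degree $d_i$ is the number of edges containing $i$, and the codegree $d_{xy}$ of distinct vertices $x,y$ is the number of edges containing both. The Laplacian $L_{\mathcal{G}}$ has $(L_{\mathcal{G}})_{ii}=d_i$ and $(L_{\mathcal{G}})_{ij}=-d_{ij}/(m-1)$ for $i\ne j$; $\lambda_n(L_{\mathcal{G}})$ is its largest eigenvalue. *)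

From HB Require Import structures.
From mathcomp Require Import all_boot all_order all_algebra.
Set Implicit Arguments. Unset Strict Implicit. Unset Printing Implicit Defensive.
Import Order.TTheory GRing.Theory Num.Theory.
Local Open Scope ring_scope.

Section Hypergraph.
Variables (n : nat) (E : {set {set 'I_n}}).

Definition uniform (m : nat) : Prop := forall e, e \in E -> #|e| = m.

Definition hdeg (i : 'I_n) : nat := #|[set e in E | i \in e]|.

Definition hcodeg (x y : 'I_n) : nat := #|[set e in E | (x \in e) && (y \in e)]|.

Definition hadj : rel 'I_n :=
  fun i j => (i != j) && [exists e in E, (i \in e) && (j \in e)].

Definition hconnected : Prop := forall i j : 'I_n, connect hadj i j.

Definition Dmax : nat := \max_(x : 'I_n) \max_(y : 'I_n | y != x) hcodeg x y.

Variable R : rcfType.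

Definition hlaplacian (m : nat) : 'M[R]_n :=
  \matrix_(i, j) (if i == j then (hdeg i)%:R
                  else - ((hcodeg i j)%:R / (m - 1)%:R)).

Definition mi (m : nat) (i : 'I_n) : R :=
  (\sum_(j | hadj i j) hdeg j)%:R / ((hdeg i)%:R * (m - 1)%:R).

Definition bound_term (m : nat) (i : 'I_n) : R :=
  let d := (hdeg i)%:R in let m1 := (m - 1)%:R in
  (2 * d * m1 - 1 +
   Num.sqrt (4 * m1 ^+ 2 * d * mi m i * (Dmax%:R) ^+ 2 - 2 * d * m1 + 1))
  / (2 * m1).

End Hypergraph.

From HB Require Import structures.
From mathcomp Require Import all_boot all_order all_algebra.
From mathcomp Require Import ring lra zify.
Set Implicit Arguments. Unset Strict Implicit. Unset Printing Implicit Defensive.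
Import Order.TTheory GRing.Theory Num.Theory.
Local Open Scope ring_scope.

(* Write the Laplacian as [L = D - A / (m - 1)], where [A] is the codegree
   matrix with zero diagonal, so that an eigenpair [(x, a)] satisfies
   [A x = (m - 1) (D - a) x].  Since [m > 2], every edge through two vertices
   [i <> k] contains a third one, whence [A <= A^2] off the diagonal.  The
   quadratic form of the symmetric matrix [A^2 - A], which has nonnegative
   off-diagonal entries, is at most [sum_i r_i x_i^2] with [r] its row sums;
   expanding both sides gives
   [sum_j ((m - 1) (a - d_j)^2 + a - sum_k d_jk d_k) x_j^2 <= 0],
   so some coefficient is nonpositive.  Solving that quadratic inequality in
   [a] and bounding [sum_k d_jk d_k <= D_max^2 sum_(k ~ j) d_k] gives the
   bound. *)

Section QuadraticForms.
Variables (R : realFieldType) (n : nat).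
Implicit Types (A C : 'I_n -> 'I_n -> R) (X d : 'I_n -> R).

Lemma sum_quad_form_le_rowsum C X :
  (forall i k, C i k = C k i) -> (forall i k, i != k -> 0 <= C i k) ->
  \sum_i \sum_k C i k * X i * X k <= \sum_i (\sum_k C i k) * X i ^+ 2.
Proof.
move=> Csym Cge0; rewrite -subr_ge0.
have swap : \sum_i \sum_k C i k * (X i ^+ 2 - X i * X k)
          = \sum_i \sum_k C i k * (X k ^+ 2 - X k * X i).
  by rewrite exchange_big; apply: eq_bigr => i _; apply: eq_bigr => k _; rewrite Csym.
have -> : \sum_i (\sum_k C i k) * X i ^+ 2 - \sum_i \sum_k C i k * X i * X k
        = (\sum_i \sum_k C i k * (X i - X k) ^+ 2) / 2.
  apply: (@mulIf _ 2); first by rewrite pnatr_eq0.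
  rewrite divfK ?pnatr_eq0 // -sumrB mulr_natr mulr2n.
  have -> : \sum_i ((\sum_k C i k) * X i ^+ 2 - \sum_k C i k * X i * X k)
          = \sum_i \sum_k C i k * (X i ^+ 2 - X i * X k).
    by apply: eq_bigr => i _; rewrite mulr_suml -sumrB; apply: eq_bigr => k _; ring.
  rewrite {2}swap -big_split /=; apply: eq_bigr => i _.
  by rewrite -big_split /=; apply: eq_bigr => k _; ring.
apply: divr_ge0 => //; apply: sumr_ge0 => i _; apply: sumr_ge0 => k _.
have [->|ik] := eqVneq i k; first by rewrite subrr expr0n mulr0.
by rewrite mulr_ge0 ?sqr_ge0 ?Cge0.
Qed.

Lemma sum_sqr_lin_form A X :
  \sum_j (\sum_i A j i * X i) ^+ 2
  = \sum_i \sum_k (\sum_j A j i * A j k) * X i * X k.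
Proof.
under eq_bigr => j _ do rewrite expr2 mulr_suml.
rewrite exchange_big; apply: eq_bigr => i _.
under eq_bigr => j _ do rewrite mulr_sumr.
rewrite exchange_big; apply: eq_bigr => k _.
by rewrite !mulr_suml; apply: eq_bigr => j _; ring.
Qed.

Lemma eigenvector_sum_sqr_le0 A d X (t a : R) :
  0 < t -> (forall i k, A i k = A k i) ->
  (forall i k, i != k -> A i k <= \sum_j A i j * A j k) ->
  (forall j, \sum_k A j k = t * d j) ->
  (forall j, \sum_i A j i * X i = t * (d j - a) * X j) ->
  \sum_j (t * (a - d j) ^+ 2 + a - \sum_k A j k * d k) * X j ^+ 2 <= 0.
Proof.
move=> t_gt0 Asym Atri Arow Aeig.
pose C i k := \sum_j A j i * A j k - A i k.
have Csym i k : C i k = C k i.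
  by rewrite /C Asym; congr (_ - _); apply: eq_bigr => j _; rewrite mulrC.
have Cge0 i k : i != k -> 0 <= C i k.
  move=> ik; rewrite subr_ge0.
  have -> : \sum_j A j i * A j k = \sum_j A i j * A j k.
    by apply: eq_bigr => j _; rewrite Asym.
  exact: Atri.
have Crow i : \sum_k C i k = t * (\sum_k A i k * d k) - t * d i.
  rewrite sumrB Arow exchange_big mulr_sumr; congr (_ - _); apply: eq_bigr => j _.
  by rewrite -mulr_sumr Arow Asym; ring.
have Cform : \sum_i \sum_k C i k * X i * X k
    = \sum_j ((\sum_i A j i * X i) ^+ 2 - X j * \sum_i A j i * X i).
  rewrite sumrB sum_sqr_lin_form -sumrB; apply: eq_bigr => i _.
  rewrite mulr_sumr -sumrB; apply: eq_bigr => k _; rewrite /C; ring.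
rewrite -(pmulr_rle0 _ t_gt0) mulr_sumr.
have -> : \sum_j t * ((t * (a - d j) ^+ 2 + a - \sum_k A j k * d k) * X j ^+ 2)
    = \sum_i \sum_k C i k * X i * X k - \sum_i (\sum_k C i k) * X i ^+ 2.
  by rewrite Cform -sumrB; apply: eq_bigr => j _; rewrite Aeig Crow; ring.
by rewrite subr_le0 sum_quad_form_le_rowsum.
Qed.
End QuadraticForms.

Lemma sum_mul_sqr_le0_exists (R : realDomainType) n (c : 'I_n -> R) (x : 'rV[R]_n) :
  x != 0 -> \sum_j c j * x 0 j ^+ 2 <= 0 -> exists j, c j <= 0.
Proof.
move=> x_neq0 le0; have [j xj_neq0] : exists j, x 0 j != 0.
  apply/existsP; apply: contraNT x_neq0 => /existsPn x_eq0.
  by apply/eqP/rowP => j; rewrite !mxE; apply/eqP/negbNE.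
apply/existsP; apply: contraLR le0; rewrite negb_exists => /forallP c_gt0.
have {}c_gt0 k : 0 < c k by rewrite ltNge c_gt0.
rewrite -ltNge (bigD1 j) //=; apply: ltr_pwDl.
- by rewrite mulr_gt0 // lt0r sqr_ge0 sqrf_eq0 xj_neq0.
- by apply: sumr_ge0 => k _; rewrite mulr_ge0 ?sqr_ge0 // ltW.
Qed.

(* [a] lies below the larger root of [t X^2 - (2 t d - 1) X + t d^2 - t Q],
   whose discriminant [4 t^2 Q - 4 t d + 1] is weakened to the one of the
   paper. *)
Lemma le_quadratic_root (R : rcfType) (t d a Q : R) :
  0 < t -> 0 <= d -> t * (a - d) ^+ 2 + a <= t * Q ->
  a <= (2 * d * t - 1 + Num.sqrt (4 * t ^+ 2 * Q - 2 * d * t + 1)) / (2 * t).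
Proof.
move=> t_gt0 d_ge0 le_tQ.
rewrite ler_pdivlMr ?mulr_gt0 //.
set K := 4 * t ^+ 2 * Q - 2 * d * t + 1; set y := 2 * t * a - 2 * d * t + 1.
have y2_le : y ^+ 2 <= K.
  have -> : y ^+ 2 = K + 4 * t * (t * (a - d) ^+ 2 + a - t * Q) - 2 * t * d.
    by rewrite /y /K; ring.
  have : 4 * t * (t * (a - d) ^+ 2 + a - t * Q) <= 0.
    by rewrite pmulr_rle0 ?mulr_gt0 // subr_le0.
  have := mulr_ge0 (ltW t_gt0) d_ge0.
  lra.
have : y <= Num.sqrt K.
  rewrite (le_trans (ler_norm y)) // -sqrtr_sqr ler_sqrt //.
  exact: le_trans (sqr_ge0 y) y2_le.
rewrite /y; lra.
Qed.

Lemma sum_bool_card (T : finType) (P Q : pred T) :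
  (\sum_(x | P x) Q x = #|[set x | P x && Q x]|)%N.
Proof.
by rewrite -sum1dep_card big_mkcondr /=; apply: eq_bigr => x _; case: (Q x).
Qed.

Section Hypergraph.
Variables (n : nat) (E : {set {set 'I_n}}).
Local Open Scope nat_scope.

Definition hadjw (i j : 'I_n) : nat := if i == j then 0 else hcodeg E i j.

Lemma hcodegE i j : hcodeg E i j = \sum_(e in E) ((i \in e) && (j \in e)).
Proof. by rewrite sum_bool_card. Qed.

Lemma hdegE i : hdeg E i = \sum_(e in E) (i \in e).
Proof. by rewrite sum_bool_card. Qed.

Lemma hcodegC i j : hcodeg E i j = hcodeg E j i.
Proof. by rewrite !hcodegE; apply: eq_bigr => e _; rewrite andbC. Qed.

Lemma hadjwC i j : hadjw i j = hadjw j i.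
Proof. by rewrite /hadjw eq_sym hcodegC. Qed.

Lemma hadjw_rowsum m : uniform E m -> forall j, \sum_k hadjw j k = hdeg E j * (m - 1).
Proof.
move=> Eunif j; rewrite (bigD1 j) //= /hadjw eqxx add0n.
under eq_bigr => k kj do rewrite eq_sym (negbTE kj) hcodegE.
rewrite exchange_big hdegE big_distrl /=; apply: eq_bigr => e eE.
case: (boolP (j \in e)) => je /=; last by rewrite big1.
rewrite mul1n sum_bool_card -(Eunif e eE) (cardsD1 j e) je add1n subn1 /=.
by apply: eq_card => k; rewrite !inE.
Qed.

Lemma hadjw_le_sqr m : 2 < m -> uniform E m -> forall i k, i != k ->
  hadjw i k <= \sum_j hadjw i j * hadjw j k.
Proof.
move=> m_gt2 Eunif i k ik.
pose T j := \sum_(e in E) [&& i \in e, j \in e & k \in e].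
have third_vertex : hadjw i k <= \sum_(j | (j != i) && (j != k)) T j.
  rewrite /hadjw (negbTE ik) hcodegE exchange_big; apply: leq_sum => e eE.
  case: (boolP (i \in e)) => ie; case: (boolP (k \in e)) => ke //=.
  rewrite sum_bool_card.
  have -> : #|[set j | (j != i) && (j != k) & (j \in e) && true]| = #|e :\ i :\ k|.
    by apply: eq_card => j; rewrite !inE andbT; case: (j == i); case: (j == k).
  have := cardsD1 i e; have := cardsD1 k (e :\ i).
  rewrite ie !inE ke eq_sym ik (Eunif e eE) /= => -> m_eq.
  by move: m_gt2; rewrite m_eq !add1n !ltnS.
apply: (leq_trans third_vertex).
rewrite [X in _ <= X](bigID (fun j => (j != i) && (j != k))) /=.
apply: leq_trans (leq_addr _ _); apply: leq_sum => j /andP [ji jk].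
have T_le_ij : T j <= hadjw i j.
  rewrite /hadjw eq_sym (negbTE ji) hcodegE; apply: leq_sum => e _.
  by case: (i \in e); case: (j \in e); case: (k \in e).
have T_le_jk : T j <= hadjw j k.
  rewrite /hadjw (negbTE jk) hcodegE; apply: leq_sum => e _.
  by case: (i \in e); case: (j \in e); case: (k \in e).
nia.
Qed.

Lemma hcodeg_le_Dmax j k : k != j -> hcodeg E j k <= Dmax E.
Proof.
move=> kj; apply: leq_trans (leq_bigmax_cond j isT).
exact: (@leq_bigmax_cond _ (fun y => y != j) (hcodeg E j) k kj).
Qed.

Lemma hcodeg_nadj j k : k != j -> ~~ hadj E j k -> hcodeg E j k = 0.
Proof.
rewrite /hadj eq_sym => -> /existsPn no_edge; apply/eqP; rewrite cards_eq0.
apply/eqP/setP => e; rewrite !inE.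
by case: (boolP (e \in E)) (no_edge e) => //= _ /negbTE.
Qed.

Lemma hdeg0_nadj j k : hdeg E j = 0 -> ~~ hadj E j k.
Proof.
move=> /eqP; rewrite cards_eq0 => /eqP no_edge; rewrite /hadj negb_and orbC.
apply/orP; left; apply/existsPn => e; apply: contraTN isT => /andP [eE /andP [je _]].
by have := in_set0 e; rewrite -no_edge inE eE je.
Qed.

Lemma hadjw_deg_sum_le j :
  \sum_k hadjw j k * hdeg E k <= Dmax E ^ 2 * \sum_(k | hadj E j k) hdeg E k.
Proof.
rewrite big_distrr /= (bigID (hadj E j)) /= [X in _ + X]big1 ?addn0.
  apply: leq_sum => k jk; have kj : k != j by move: jk; rewrite /hadj eq_sym => /andP [].
  rewrite /hadjw eq_sym (negbTE kj) leq_mul //.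
  apply: leq_trans (hcodeg_le_Dmax kj) _.
  by case: (Dmax E) => // D; rewrite leq_pmulr.
move=> k njk; rewrite /hadjw; case: eqP => [//|/eqP jk].
by rewrite hcodeg_nadj // eq_sym.
Qed.

End Hypergraph.

Section LaplacianBound.
Variables (n m : nat) (E : {set {set 'I_n}}) (R : rcfType).
Hypothesis m_gt1 : (1 < m)%N.

Lemma hlaplacianE i j :
  hlaplacian E R m i j
  = (i == j)%:R * (hdeg E i)%:R - (hadjw E i j)%:R / (m - 1)%:R.
Proof.
by rewrite mxE /hadjw; case: eqP => _; rewrite ?mul1r ?mul0r ?subr0 ?sub0r.
Qed.

Lemma hlaplacian_eigen (x : 'rV[R]_n) a :
  x *m hlaplacian E R m = a *: x -> forall j,
  \sum_i (hadjw E j i)%:R * x 0 i = (m - 1)%:R * ((hdeg E j)%:R - a) * x 0 j.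
Proof.
move=> eig j; have t_neq0 : (m - 1)%:R != 0 :> R by rewrite pnatr_eq0 subn_eq0 -ltnNge.
have := congr1 (fun y : 'rV[R]_n => y 0 j) eig; rewrite !mxE.
under eq_bigr => i _ do rewrite hlaplacianE mulrBr.
rewrite sumrB (bigD1 j) //= eqxx mul1r big1 => [|i ij]; last first.
  by rewrite (negbTE ij) !mul0r mulr0.
rewrite addr0 => entry_j.
have -> : \sum_i (hadjw E j i)%:R * x 0 i
        = (m - 1)%:R * \sum_i x 0 i * ((hadjw E i j)%:R / (m - 1)%:R).
  by rewrite mulr_sumr; apply: eq_bigr => i _; rewrite hadjwC; field.
have -> : \sum_i x 0 i * ((hadjw E i j)%:R / (m - 1)%:R)
        = x 0 j * (hdeg E j)%:R - a * x 0 j by rewrite -entry_j; ring.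
ring.
Qed.

Lemma hdeg_mi j :
  (hdeg E j)%:R * mi E R m j * (m - 1)%:R = (\sum_(k | hadj E j k) hdeg E k)%:R.
Proof.
rewrite /mi; have [d0|d_neq0] := eqVneq (hdeg E j) 0%N.
  rewrite d0 big_pred0 => [|k]; last exact/negbTE/hdeg0_nadj.
  by rewrite !mul0r.
by field; rewrite !pnatr_eq0 d_neq0 andbT subn_eq0 -ltnNge.
Qed.

Lemma bound_term_ge a j :
  (m - 1)%:R * (a - (hdeg E j)%:R) ^+ 2 + a
    - \sum_k (hadjw E j k)%:R * (hdeg E k)%:R <= 0 ->
  a <= bound_term E R m j.
Proof.
rewrite subr_le0 => le_wdeg.
have t_gt0 : 0 < (m - 1)%:R :> R by rewrite ltr0n subn_gt0.
rewrite /bound_term /= -[4 * _ * _ * _ * _]mulrA -[4 * _ * _ * _]mulrA.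
apply: le_quadratic_root t_gt0 (ler0n _ _) _; apply: (le_trans le_wdeg).
have -> : (m - 1)%:R * ((hdeg E j)%:R * (mi E R m j * (Dmax E)%:R ^+ 2))
        = (Dmax E ^ 2 * \sum_(k | hadj E j k) hdeg E k)%N%:R :> R.
  by rewrite natrM natrX -hdeg_mi; ring.
rewrite (eq_bigr (fun k => (hadjw E j k * hdeg E k)%N%:R)) => [|k _].
  by rewrite -natr_sum ler_nat hadjw_deg_sum_le.
by rewrite natrM.
Qed.

End LaplacianBound.

Theorem theorem12 (R : rcfType) (n m : nat) (E : {set {set 'I_n}}) :
  (2 < m)%N -> uniform E m -> hconnected E ->
  forall a : R, eigenvalue (hlaplacian E R m) a ->
  exists i : 'I_n, a <= bound_term E R m i.
Proof.
move=> m_gt2 Eunif _ a /eigenvalueP [x eig x_neq0].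
have m_gt1 : (1 < m)%N by exact: ltnW.
have t_gt0 : 0 < (m - 1)%:R :> R by rewrite ltr0n subn_gt0.
have Asym i k : (hadjw E i k)%:R = (hadjw E k i)%:R :> R by rewrite hadjwC.
have Atri i k : i != k ->
    (hadjw E i k)%:R <= \sum_j (hadjw E i j)%:R * (hadjw E j k)%:R :> R.
  move=> ik; rewrite (eq_bigr (fun j => (hadjw E i j * hadjw E j k)%N%:R)) => [|j _].
    by rewrite -natr_sum ler_nat (hadjw_le_sqr m_gt2 Eunif ik).
  by rewrite natrM.
have Arow j : \sum_k (hadjw E j k)%:R = (m - 1)%:R * (hdeg E j)%:R :> R.
  by rewrite -natr_sum (hadjw_rowsum Eunif) natrM mulrC.
have := eigenvector_sum_sqr_le0 t_gt0 Asym Atri Arow (hlaplacian_eigen m_gt1 eig).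
case/(sum_mul_sqr_le0_exists x_neq0) => j /(bound_term_ge m_gt1).
by exists j.
Qed.
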